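(* Let $\Sigma=(0,\infty]$, ordered by the usual order $\le$, let $a,b\in\mathbb{N}$ with $a,b>1$ and $c\in\mathbb{R}$ with $c>0$. Fix $z\in\Sigma^{\infty}$ with $l(z)=\infty$ and $z_k\neq\infty$ for all $k\in\omega_b$ with $k\ge2$. Let $$\Sigma_{b,c}^{\infty}:=\{y\in\Sigma^{\infty}: 2\le l(y),\ y_1=c,\ y_k=\infty \text{ for all } k\notin\omega_b \text{ with } 2\le k\le l(y)\}.$$ Define $\Theta_{a,b}^{z}:\Sigma_{b,c}^{\infty}\to\Sigma_{b,c}^{\infty}$ by $\Theta_{a,b}^{z}(x)=x_{\Theta_{a,b}^{z}}$, where $$(x_{\Theta_{a,b}^{z}})_k:=\begin{cases} c & \text{if } k=1,\\ \infty & \text{if } k\notin\omega_b \text{ and } 2\le k\le l(x)+1,\\ a\cdot x_{k/b}+z_k & \text{if } k\in\omega_b \text{ and } k/b\le l(x).\end{cases}$$ Then $\Theta_{a,b}^{z}$ has a unique fixed point $v\in\Sigma_{b,c}^{\infty}$, and $l(v)=\infty$. Moreover, if $u\in\Sigma_{b,c}^{\infty}$ satisfies $\Theta_{a,b}^{z}(u)\sqsubseteq_{sp}u$, then $v\sqsubseteq_{sp}u$.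
   Context: $\mathbb{N}$ is the set of positive integers; $\omega_b=\{b^k:k\in\mathbb{N}\}$. $\Sigma^{\infty}$ is the set of all nonempty finite and infinite words over $\Sigma$; $l(x)\in[1,\infty]$ is the length of $x$ and $x_k$ its $k$-th letter. For $x,y\in\Sigma^\infty$, $x\sqsubseteq_{sp}y$ (''$x$ is a subprefix of $y$'') means there exists $n_0\in\mathbb{N}$ with $n_0\le l(x)$ such that $x_k\le y_k$ for all $k\le n_0$. Arithmetic on $(0,\infty]$ uses the usual conventions with $\infty$. *)

(* letters of Sigma = (0, +oo] are elements of \bar R. *)
From mathcomp Require Import all_boot all_order all_algebra.
From mathcomp Require Import all_classical all_reals all_analysis.
Set Implicit Arguments. Unset Strict Implicit. Unset Printing Implicit Defensive.
Import Order.TTheory GRing.Theory Num.Theory.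
Local Open Scope ereal_scope.

(* A word over Sigma: a length in [1, oo] (None = oo) and its letters,
   indexed from 1.  Letters at indices outside 1..len are irrelevant. *)
Record word (R : realType) := Word { wlen : option nat ; wlet : nat -> \bar R }.

Definition inlen (l : option nat) (k : nat) : Prop :=
  (1 <= k)%N /\ (match l with Some n => (k <= n)%N | None => True end).

Definition isword (R : realType) (x : word R) : Prop :=
  (match wlen x with Some n => (1 <= n)%N | None => True end) /\
  (forall k, inlen (wlen x) k -> 0 < wlet x k).

Definition weq (R : realType) (x y : word R) : Prop :=
  wlen x = wlen y /\ (forall k, inlen (wlen x) k -> wlet x k = wlet y k).

Definition omegab (b k : nat) : bool :=
  [exists j : 'I_k.+1, (0 < (j : nat))%N && (b ^ j == k)%N].

Definition Sigma_bc (R : realType) (b : nat) (c : R) (y : word R) : Prop :=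
  isword y /\
  (match wlen y with Some n => (2 <= n)%N | None => True end) /\
  wlet y 1 = c%:E /\
  (forall k, ~~ omegab b k -> (2 <= k)%N -> inlen (wlen y) k -> wlet y k = +oo).

(* Its letters are given by the three cases; its length is
   the largest L such that every index 1..L is covered by one of the cases:
   oo if l(x) = oo, and for l(x) = n >= 2 it is n+2 if n+2 \in omega_b and
   n+1 otherwise (indices n+2 resp. n+3 being the first uncovered one). *)
Definition Theta (R : realType) (a b : nat) (c : R) (z : word R) (x : word R)
  : word R :=
  Word (match wlen x with
        | Some n => Some (if omegab b n.+2 then n.+2 else n.+1)
        | None => None end)
       (fun k => if k == 1%N then c%:E
                 else if omegab b k then (a%:R)%:E * wlet x (k %/ b) + wlet z k
                 else +oo).

(* x is a subprefix of y: exists n0 with 1 <= n0 <= l(x) and x_k <= y_k for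
   all 1 <= k <= n0 (the letters y_k must exist, i.e. n0 <= l(y)). *)
Definition subprefix (R : realType) (x y : word R) : Prop :=
  exists n0 : nat, inlen (wlen x) n0 /\ inlen (wlen y) n0 /\
    (forall k, (1 <= k)%N -> (k <= n0)%N -> wlet x k <= wlet y k).

From mathcomp Require Import all_boot all_order all_algebra.
From mathcomp Require Import all_classical all_reals all_analysis.
Import Order.TTheory GRing.Theory Num.Theory.
Local Open Scope ereal_scope.

(* The letters of [Theta x] at an index k depend only on the letters of [x] at
   indices in [1, k), and monotonically so.  Iterating the letter map n times
   from any start therefore fixes letters 1..n, and the diagonal of the iterates
   is a fixed point of infinite length; by the same causality it is the only
   fixed point and lies below every word u with [Theta u <= u] on a prefix. *)

Lemma omegab_ge {b k : nat} : (1 < b)%N -> omegab b k -> (b <= k)%N.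
Proof.
move=> b_gt1 /existsP[j /andP[j_gt0 /eqP <-]].
case: (nat_of_ord j) j_gt0 => // n _.
by rewrite expnS leq_pmulr // expn_gt0 ltnW.
Qed.

Lemma omegab_divn {b k : nat} : (1 < b)%N -> omegab b k -> (0 < k %/ b < k)%N.
Proof.
move=> b_gt1 kb; have b_le_k := omegab_ge b_gt1 kb.
have b_gt0 : (0 < b)%N by apply: leq_trans b_gt1.
by rewrite divn_gt0 // b_le_k ltn_Pdiv // (leq_trans b_gt0).
Qed.

Section ThetaFixpoint.
Context {R : realType} {a b : nat} {c : R} {z : word R}.
Hypothesis b_gt1 : (1 < b)%N.

Definition theta_let (f : nat -> \bar R) (k : nat) : \bar R :=
  if k == 1%N then c%:E
  else if omegab b k then (a%:R)%:E * f (k %/ b) + wlet z k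
  else +oo.

Lemma wlet_Theta (x : word R) : wlet (Theta a b c z x) = theta_let (wlet x).
Proof. by []. Qed.

Lemma theta_let_le (f g : nat -> \bar R) (k : nat) :
  (forall i, (0 < i < k)%N -> f i <= g i) -> theta_let f k <= theta_let g k.
Proof.
move=> fg; rewrite /theta_let; case: eqP => // _.
case kb: (omegab b k) => //; apply: leeD => //.
by apply: lee_wpmul2l; [rewrite lee_fin | apply: fg; apply: omegab_divn].
Qed.

Lemma theta_let_eq (f g : nat -> \bar R) (k : nat) :
  (forall i, (0 < i < k)%N -> f i = g i) -> theta_let f k = theta_let g k.
Proof.
by move=> fg; apply/le_anti; rewrite !theta_let_le // => i /fg ->.
Qed.

Lemma iter_theta_let_indep (n k : nat) (f g : nat -> \bar R) :
  (0 < k <= n)%N -> iter n theta_let f k = iter n theta_let g k.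
Proof.
elim: n k => [|n IH] k; first by case: k.
move=> /andP[k_gt0 k_le]; rewrite !iterS; apply: theta_let_eq => i /andP[i_gt0 ik].
by apply: IH; rewrite i_gt0 -ltnS (leq_trans ik).
Qed.

Lemma iter_theta_let_stable (n m k : nat) (f : nat -> \bar R) :
  (n <= m)%N -> (0 < k <= n)%N -> iter m theta_let f k = iter n theta_let f k.
Proof.
move=> nm kn; rewrite -(subnKC nm) iterD.
exact: iter_theta_let_indep.
Qed.

Definition theta_fix : word R :=
  Word None (fun k => iter k theta_let (fun=> +oo) k).

Lemma wlet_theta_fix (k : nat) :
  (0 < k)%N -> wlet theta_fix k = theta_let (wlet theta_fix) k.
Proof.
case: k => // k _ /=; apply: theta_let_eq => i /andP[i_gt0 ik].
by rewrite (@iter_theta_let_stable i k) ?i_gt0 ?leqnn.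
Qed.

Lemma theta_let_fix_unique (f g : nat -> \bar R) :
  (forall k, (0 < k)%N -> theta_let f k = f k) ->
  (forall k, (0 < k)%N -> theta_let g k = g k) ->
  forall k, (0 < k)%N -> f k = g k.
Proof.
move=> ff gg; elim/ltn_ind => k IH k_gt0.
rewrite -ff // -gg //; apply: theta_let_eq => i /andP[i_gt0 ik].
exact: IH.
Qed.

Lemma theta_fix_least {u : nat -> \bar R} {n : nat} :
  (forall k, (0 < k <= n)%N -> theta_let u k <= u k) ->
  forall k, (0 < k <= n)%N -> wlet theta_fix k <= u k.
Proof.
move=> uu; elim/ltn_ind => k IH /andP[k_gt0 kn].
rewrite wlet_theta_fix //; apply: le_trans (uu _ _); last by rewrite k_gt0.
apply: theta_let_le => i /andP[i_gt0 ik]; apply: IH; rewrite ?i_gt0 //.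
exact: leq_trans (ltnW ik) kn.
Qed.

Lemma theta_fix_gt0 (k : nat) :
  (forall i, (0 < i)%N -> 0 < wlet z i) -> (0 < c)%R ->
  (0 < k)%N -> 0 < wlet theta_fix k.
Proof.
move=> z_gt0 c_gt0; elim/ltn_ind: k => k IH k_gt0.
rewrite wlet_theta_fix // /theta_let; case: eqP => _; first by rewrite lte_fin.
case kb: (omegab b k) => //; apply: lt_le_trans (z_gt0 _ k_gt0) (leeDr _ _).
have /andP[q_gt0 q_lt_k] := omegab_divn b_gt1 kb.
by rewrite mule_ge0 ?lee_fin // ltW // IH.
Qed.

Lemma Theta_wlen_fix (x : word R) :
  wlen (Theta a b c z x) = wlen x -> wlen x = None.
Proof.
rewrite /=; case: (wlen x) => // n [].
by case: ifP => _ /eqP; rewrite gtn_eqF // (leqW (ltnSn n)).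
Qed.

Lemma theta_fix_Sigma_bc :
  (forall i, (0 < i)%N -> 0 < wlet z i) -> (0 < c)%R -> Sigma_bc b c theta_fix.
Proof.
move=> z_gt0 c_gt0; split; first by split=> // k [k_gt0 _]; exact: theta_fix_gt0.
split=> //; split; first by rewrite wlet_theta_fix.
move=> k kNb k_ge2 _; rewrite wlet_theta_fix ?(ltnW k_ge2) // /theta_let.
by rewrite (negPf kNb) gtn_eqF.
Qed.

End ThetaFixpoint.

Arguments theta_fix {R} a b c z.

Theorem theorem8 (R : realType) (a b : nat) (c : R) (z : word R) :
  (1 < a)%N -> (1 < b)%N -> (0 < c)%R ->
  isword z -> wlen z = None ->
  (forall k, omegab b k -> (2 <= k)%N -> wlet z k != +oo) ->
  exists v : word R,
    [/\ Sigma_bc b c v,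
        weq (Theta a b c z v) v,
        (forall w : word R, Sigma_bc b c w -> weq (Theta a b c z w) w -> weq w v),
        wlen v = None &
        (forall u : word R, Sigma_bc b c u ->
           subprefix (Theta a b c z u) u -> subprefix v u)].
Proof.
move=> _ b_gt1 c_gt0 [_ z_pos] z_inf _.
have z_gt0 k : (0 < k)%N -> 0 < wlet z k by move=> k_gt0; apply: z_pos; rewrite z_inf.
have fixP := @wlet_theta_fix R a b c z b_gt1.
exists (theta_fix a b c z); split => //.
- exact: theta_fix_Sigma_bc.
- by split=> // k [k_gt0 _]; rewrite wlet_Theta -fixP.
- move=> w _ [/Theta_wlen_fix w_inf w_fix]; split=> //; rewrite w_inf => k [k_gt0 _].
  apply: (theta_let_fix_unique b_gt1) k_gt0 => [i i_gt0|]; last by move=> i /fixP ->.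
  by rewrite -wlet_Theta w_fix //= w_inf.
- move=> u _ [n [n_Th [n_u u_le]]]; exists n; split; first by case: n_u.
  split=> //.
  have u_ge k : (0 < k <= n)%N -> wlet (Theta a b c z u) k <= wlet u k.
    by case/andP=> k_gt0 kn; rewrite u_le.
  by move=> k k_gt0 kn; rewrite (theta_fix_least b_gt1 u_ge) ?k_gt0.
Qed.
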